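(* Let $\mathcal{B}$ be a nontrivial boolean algebra and let $Y\subseteq \mathcal{B}^n$ be an algebraic set over $\mathcal{B}$. Then $Y$ is irreducible over $\mathcal{B}$ if and only if the coordinate algebra $\Gamma_{\mathcal{B}}(Y)$ embeds into $\mathcal{B}$.
   Context: Boolean algebras are considered as structures in the language $\{\vee,\cdot,\bar{\ },0,1\}$ (join, meet, complement, constants). A boolean equation in variables $X=\{x_1,\dots,x_n\}$ is an expression $t(X)=s(X)$ with $t,s$ terms of this language; a system is any set of such equations, and $V_{\mathcal{B}}(S)\subseteq\mathcal{B}^n$ denotes its solution set. A set $Y\subseteq\mathcal{B}^n$ is algebraic if $Y=V_{\mathcal{B}}(S)$ for some system $S$. A nonempty algebraic set is irreducible if it is not a finite union of proper algebraic subsets. For an algebraic set $Y$, define $t\sim_Y s$ on terms in $X$ iff $t(P)=s(P)$ for every $P\in Y$; the set of equivalence classes, with the induced operations, is the coordinate algebra $\Gamma_{\mathcal{B}}(Y)$ (it is a finite boolean algebra generated by the classes of $x_1,\dots,x_n$). *)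

(* Boolean algebras = mathcomp's ctbDistrLatticeType
   (complemented distributive lattices with top and bottom). *)
From HB Require Import structures.
From mathcomp Require Import all_boot all_order.
Set Implicit Arguments. Unset Strict Implicit. Unset Printing Implicit Defensive.
Import Order.Theory.
Local Open Scope order_scope.

Inductive bterm (n : nat) : Type :=
| BVar  of 'I_n
| BJoin of bterm n & bterm n
| BMeet of bterm n & bterm n
| BCompl of bterm n
| BZero
| BOne.
Arguments BZero {n}.
Arguments BOne {n}.

Section Eval.
Variables (d : Order.disp_t) (B : ctbDistrLatticeType d) (n : nat).

Fixpoint beval (t : bterm n) (P : 'I_n -> B) : B :=
  match t with
  | BVar i => P i
  | BJoin t1 t2 => beval t1 P `|` beval t2 P
  | BMeet t1 t2 => beval t1 P `&` beval t2 P
  | BCompl t1 => ~` beval t1 P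
  | BZero => \bot
  | BOne => \top
  end.

Definition bequation := (bterm n * bterm n)%type.

Definition V_B (S : bequation -> Prop) : ('I_n -> B) -> Prop :=
  fun P => forall e, S e -> beval e.1 P = beval e.2 P.

Definition algebraic (Y : ('I_n -> B) -> Prop) : Prop :=
  exists S : bequation -> Prop, forall P, Y P <-> V_B S P.

Definition irreducible (Y : ('I_n -> B) -> Prop) : Prop :=
  algebraic Y /\ (exists P, Y P) /\
  ~ (exists (k : nat) (Z : 'I_k -> ('I_n -> B) -> Prop),
        (forall i, algebraic (Z i)) /\
        (forall i, (forall P, Z i P -> Y P) /\ (exists P, Y P /\ ~ Z i P)) /\
        (forall P, Y P <-> exists i, Z i P)).

Definition coord_equiv (Y : ('I_n -> B) -> Prop) (t s : bterm n) : Prop :=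
  forall P, Y P -> beval t P = beval s P.

(* The coordinate algebra Gamma_B(Y) is the term algebra modulo ~_Y.
   An embedding Gamma_B(Y) -> B is (by the universal property of the quotient)
   the same as a map h on terms which preserves join, meet, complement, 0, 1
   and whose kernel is exactly ~_Y (compatibility + injectivity on classes). *)
Definition coord_embeds (Y : ('I_n -> B) -> Prop) : Prop :=
  exists h : bterm n -> B,
    [/\ forall t s, h (BJoin t s) = h t `|` h s,
        forall t s, h (BMeet t s) = h t `&` h s,
        forall t, h (BCompl t) = ~` h t,
        h BZero = \bot /\ h BOne = \top
      & forall t s, h t = h s <-> coord_equiv Y t s].

End Eval.

(* A point [P] of [Y] is generic when every equation holding at [P] holds on
   all of [Y]; then [t |-> t(P)] embeds the coordinate algebra into [B], and
   conversely the images of the variables under an embedding form a generic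
   point.  A generic point lies in every algebraic set through it, so [Y] is
   irreducible.  Conversely, [Y] is covered by the algebraic sets
   [Y /\ m = 0], where [m] ranges over the minterms that do not vanish on [Y];
   irreducibility gives a point [P] at which no such minterm vanishes.  A
   term [t] restricted to a minterm region is either [m] or [0], according to
   the value of [t] at the corresponding point of the two-element algebra;
   hence [t(P) = u(P)] forces [t] and [u] to agree on every nonvanishing
   minterm region, which cover [Y], so [P] is generic. *)
From HB Require Import structures.
From mathcomp Require Import all_boot all_order.
From mathcomp Require Import boolp.
Import Order.Theory.
Local Open Scope order_scope.

Set Implicit Arguments. Unset Strict Implicit.

Section Minterms.
Variables (d : Order.disp_t) (B : ctbDistrLatticeType d) (n : nat).
Implicit Types (Q : 'I_n -> B) (s : {ffun 'I_n -> bool}) (l : seq 'I_n).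

Definition literal (b : bool) (i : 'I_n) : bterm n :=
  if b then BVar i else BCompl (BVar i).

Definition minterm_on s l : bterm n :=
  foldr (@BMeet n) BOne [seq literal (s i) i | i <- l].

Definition minterm s : bterm n := minterm_on s (enum 'I_n).

Lemma beval_minterm_le_literal Q s i :
  beval (minterm s) Q <= beval (literal (s i) i) Q.
Proof.
have : i \in enum 'I_n by rewrite mem_enum.
rewrite /minterm /minterm_on; elim: (enum 'I_n) => // j l IH.
rewrite inE => /orP [/eqP ->|/IH le_l] /=; first exact: leIl.
exact: leIxr le_l.
Qed.

(* [s] is read as a point of the two-element algebra [bool]. *)
Lemma meet_beval_below_literals Q s (m : B) :
  (forall i, m <= beval (literal (s i) i) Q) ->
  forall t, m `&` beval t Q = if beval t s then m else \bot.
Proof.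
move=> m_le; elim=> [i|a IHa b IHb|a IHa b IHb|a IHa||] /=.
- have := m_le i; rewrite /literal; case: (s i) => /= le_m.
    exact/meet_idPl.
  by rewrite -(meet_idPl le_m) -meetA meetCx meetx0.
- by rewrite meetUr IHa IHb; case: (beval a s); case: (beval b s);
    rewrite /= ?joinxx ?joinx0 ?join0x.
- by rewrite meetA IHa; case: (beval a s); rewrite /= ?meet0x.
- have split_m : m = m `&` beval a Q `|` m `&` ~` beval a Q.
    by rewrite -meetUr joinxC meetx1.
  move: IHa split_m; case: (beval a s) => /= IHa; rewrite IHa.
    by rewrite -IHa -meetA meetxC meetx0.
  by rewrite join0x.
- exact: meetx0.
- exact: meetx1.
Qed.

Lemma minterm_on_eq_in s s' l :
  {in l, s =1 s'} -> minterm_on s l = minterm_on s' l.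
Proof. by move=> eq_s; congr foldr; apply/eq_in_map => i /eq_s ->. Qed.

(* Splitting along the first variable [i]: since [i] does not occur in [l],
   the minterms on [l] do not see the value of [s] at [i]. *)
Lemma minterms_on_meet_eq0 Q l (a : B) : uniq l ->
  (forall s, beval (minterm_on s l) Q `&` a = \bot) -> a = \bot.
Proof.
elim: l a => [|i l IH] a /=.
  by move=> _ /(_ [ffun=> true]); rewrite meet1x.
move=> /andP [i_l uniq_l] meet0.
have lit_meet0 b : beval (literal b i) Q `&` a = \bot.
  apply: IH => // s; pose s1 := [ffun j => if j == i then b else s j].
  have -> : minterm_on s l = minterm_on s1 l.
    apply: minterm_on_eq_in => j j_l; rewrite ffunE.
    by case: eqP j_l => // ->; rewrite (negPf i_l).
  have := meet0 s1; rewrite /= ffunE eqxx.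
  by rewrite meetA [X in X `&` a]meetC.
have := lit_meet0 false; have := lit_meet0 true => /= Qi0 nQi0.
by rewrite -[a]meet1x -(joinxC (Q i)) meetUl Qi0 nQi0 joinx0.
Qed.

Lemma le_of_minterms Q (a b : B) :
  (forall s, beval (minterm s) Q `&` a <= b) -> a <= b.
Proof.
move=> le_ab; rewrite -[b]complK -disj_leC; apply/eqP.
apply: (minterms_on_meet_eq0 (l := enum 'I_n)); first exact: enum_uniq.
move=> s; apply/eqP; rewrite -/(minterm s) meetA disj_leC complK.
exact: le_ab.
Qed.

End Minterms.

Section GenericPoints.
Variables (d : Order.disp_t) (B : ctbDistrLatticeType d) (n : nat).
Implicit Types (Y Z : ('I_n -> B) -> Prop) (P Q R : 'I_n -> B).
Implicit Types (s : {ffun 'I_n -> bool}).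

Definition generic_point Y P :=
  Y P /\ forall t u, beval t P = beval u P -> coord_equiv Y t u.

Lemma algebraic_eq_sub Y t u : algebraic Y ->
  algebraic (fun P => Y P /\ beval t P = beval u P).
Proof.
case=> S defY; exists (fun e => S e \/ e = (t, u)) => P; split.
  by case=> /defY YP ts_eq e [/YP|->].
move=> V_P; split; last exact: V_P (or_intror erefl).
by apply/defY => e Se; apply: V_P; left.
Qed.

Lemma generic_point_sub Y Z P : generic_point Y P -> algebraic Z -> Z P ->
  forall Q, Y Q -> Z Q.
Proof.
move=> [_ genP] [S defZ] /defZ ZP Q YQ; apply/defZ => e Se.
exact: genP (ZP e Se) Q YQ.
Qed.

Lemma irreducible_of_generic Y P : algebraic Y -> generic_point Y P ->
  irreducible Y.
Proof.
move=> algY genP; split=> //; split; first by exists P; case: genP.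
case=> k [Z [algZ [properZ defY]]].
have [i ZiP] := (defY P).1 genP.1.
have [_ [Q [YQ notZiQ]]] := properZ i.
exact/notZiQ/(generic_point_sub genP (algZ i) ZiP).
Qed.

Lemma coord_embeds_of_generic Y P : generic_point Y P -> coord_embeds Y.
Proof.
move=> [YP genP]; exists (fun t => beval t P); split=> // t u.
by split=> [/genP|]; last exact.
Qed.

Lemma generic_of_coord_embeds Y : algebraic Y -> coord_embeds Y ->
  exists P, generic_point Y P.
Proof.
move=> [S defY] [h [hJ hM hC [h0 h1] hK]].
pose P i := h (BVar i).
have beval_P t : beval t P = h t.
  by elim: t => //= [a -> b ->|a -> b ->|a ->]; rewrite ?hJ ?hM ?hC.
exists P; split=> [|t u]; last by rewrite !beval_P => /hK.
apply/defY => e Se; rewrite !beval_P; apply/hK => Q /defY.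
exact.
Qed.

Lemma generic_of_nonvanishing_minterms Y P : Y P ->
  (forall s, ~ coord_equiv Y (minterm s) BZero -> beval (minterm s) P != \bot) ->
  generic_point Y P.
Proof.
move=> YP nonvanishing; split=> // t u tu_eq Q YQ.
have region_eq R s : beval t s = beval u s ->
    beval (minterm s) R `&` beval t R = beval (minterm s) R `&` beval u R.
  have below := meet_beval_below_literals (beval_minterm_le_literal R s).
  by rewrite !below => ->.
have vanishing s : beval t s != beval u s -> coord_equiv Y (minterm s) BZero.
  move=> tu_neq; apply: contrapT => /nonvanishing/negP; apply; apply/eqP.
  have below := meet_beval_below_literals (beval_minterm_le_literal P s).
  move: (below t) tu_neq; rewrite tu_eq below.
  by case: (beval t s); case: (beval u s).
have region_eqQ s :
    beval (minterm s) Q `&` beval t Q = beval (minterm s) Q `&` beval u Q.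
  have [/region_eq //|/vanishing/(_ Q YQ) /= ->] := eqVneq (beval t s) (beval u s).
  by rewrite !meet0x.
by apply/le_anti/andP; split; apply: (le_of_minterms (Q := Q)) => s;
  [rewrite region_eqQ | rewrite -region_eqQ]; apply: leIr.
Qed.

Lemma not_irreducible_of_cover Y (I : finType) (A : pred I)
    (Z : I -> ('I_n -> B) -> Prop) :
  (forall i, algebraic (Z i)) ->
  (forall i, A i -> (forall P, Z i P -> Y P) /\ exists P, Y P /\ ~ Z i P) ->
  (forall P, Y P <-> exists2 i, A i & Z i P) ->
  ~ irreducible Y.
Proof.
move=> algZ properZ defY [_ [_]]; apply.
exists #|A|, (fun j => Z (enum_val j)); split; [|split] => [j|j|P].
- exact: algZ.
- exact/properZ/enum_valP.
- split=> [/defY [i Ai ZiP]|[j ZjP]]; last exact: (properZ _ (enum_valP j)).1.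
  by exists (enum_rank_in Ai i); rewrite enum_rankK_in.
Qed.

Lemma nonvanishing_minterms_of_irreducible Y : irreducible Y ->
  exists P, Y P /\ forall s,
    ~ coord_equiv Y (minterm s) BZero -> beval (minterm s) P != \bot.
Proof.
move=> irrY; have algY := irrY.1; apply: contrapT => no_point.
pose A s := `[< ~ coord_equiv Y (minterm s) BZero >].
pose Z s P := Y P /\ beval (minterm s) P = beval BZero P.
apply: (@not_irreducible_of_cover Y _ A Z) irrY => [s|s /asboolP nz_s|P].
- exact: algebraic_eq_sub.
- split=> [P []//|]; apply: contrapT => all_Z; apply: nz_s => Q YQ.
  apply: contrapT => ZQ; apply: all_Z.
  by exists Q; split=> // [[_ /ZQ]].
- split=> [YP|[s _ []//]]; apply: contrapT => no_s; apply: no_point.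
  exists P; split=> // s nz_s; apply/eqP => ms0; apply: no_s.
  by exists s; [exact/asboolP|].
Qed.

End GenericPoints.

Theorem theorem1 (d : Order.disp_t) (B : ctbDistrLatticeType d) (n : nat)
  (nontriv : (\bot : B) != \top)
  (Y : ('I_n -> B) -> Prop) (HY : algebraic Y) :
  irreducible Y <-> coord_embeds Y.
Proof.
split=> [irrY|embY].
- have [P [YP nonvanishing]] := nonvanishing_minterms_of_irreducible irrY.
  exact/coord_embeds_of_generic/generic_of_nonvanishing_minterms/nonvanishing.
- have [P genP] := generic_of_coord_embeds HY embY.
  exact: irreducible_of_generic genP.
Qed.
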